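(* Let $\mathfrak a$ be a finite-dimensional real vector space, $\mathcal R$ a lattice in $\mathfrak a$, and $E$ a finite subset of $\widehat{\mathcal R}=\widehat{\mathfrak a}/\mathcal R^\vee$. For each $\nu\in E$ let $p_\nu$ be a polynomial function on $\mathfrak a$, and for $T\in\mathcal R$ put $$\phi(T)=\sum_{\nu\in E}p_\nu(T)e^{\langle\nu,T\rangle}.$$ Let $C$ be a non-empty open cone in $\mathfrak a$ and $T_\star\in\mathcal R$. If $\phi(T)\to 0$ as $\|T\|\to\infty$ with $T\in T_\star+(C\cap\mathcal R)$, then $p_\nu=0$ for every $\nu\in E$.
   Context: $\widehat{\mathfrak a}=i\mathfrak a^*$ (identified with the Pontryagin dual of $\mathfrak a$ via the exponential), $\mathcal R^\vee=\{\Lambda\in i\mathfrak a^*:\langle\Lambda,X\rangle\in 2\pi i\mathbb Z \text{ for all } X\in\mathcal R\}$, so that $\widehat{\mathcal R}=i\mathfrak a^*/\mathcal R^\vee$ is the Pontryagin dual of $\mathcal R$; for $\nu\in\widehat{\mathcal R}$ and $T\in\mathcal R$ the number $e^{\langle\nu,T\rangle}$ is well defined. $\|\cdot\|$ is any norm on $\mathfrak a$. *)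

From mathcomp Require Import all_boot all_order all_algebra.
From mathcomp Require Import all_classical all_reals all_analysis.
From mathcomp Require Export complex.
Export GRing.Theory Num.Theory numFieldTopology.Exports numFieldNormedType.Exports.
Set Implicit Arguments. Unset Strict Implicit. Unset Printing Implicit Defensive.
Local Open Scope ring_scope.
Local Open Scope classical_set_scope.

(* The real vector space a is modelled as 'rV[R]_n (coordinates in a basis). *)

Definition dotv (R : realType) (n : nat) (x y : 'rV[R]_n) : R :=
  \sum_(k < n) x 0 k * y 0 k.

Definition in_lattice (R : realType) (n : nat) (B : 'M[R]_n) (X : 'rV[R]_n) : Prop :=
  exists z : 'rV[int]_n, X = map_mx (fun k : int => k%:~R) z *m B.

(* lambda [nu = i lambda] lies in the dual lattice R^vee:
   <nu, X> in 2 pi i Z for all X in the lattice. *)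
Definition in_dual_lattice (R : realType) (n : nat) (B : 'M[R]_n) (lam : 'rV[R]_n) : Prop :=
  forall X, in_lattice B X -> exists k : int, dotv lam X = 2 * pi * k%:~R.

Definition charv (R : realType) (n : nat) (lam T : 'rV[R]_n) : R[i] :=
  (cos (dotv lam T) +i* sin (dotv lam T))%C.

Definition is_polyfun (R : realType) (n : nat) (f : 'rV[R]_n -> R[i]) : Prop :=
  exists s : seq (R[i] * {ffun 'I_n -> nat}),
    forall x : 'rV[R]_n,
      f x = \sum_(c <- s) c.1 * \prod_(k < n) (((x 0 k)%:C)%C ^+ c.2 k).

Definition is_cone (R : realType) (n : nat) (C : set 'rV[R]_n) : Prop :=
  forall x t, C x -> 0 < t -> C (t *: x).

(* A norm on a (sup norm of coordinates; all norms are equivalent). *)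
Definition supnorm (R : realType) (n : nat) (x : 'rV[R]_n) : R :=
  \big[Num.max/0]_(k < n) `|x 0 k|.

Definition phi (R : realType) (n m : nat) (nu : 'I_m -> 'rV[R]_n)
  (p : 'I_m -> 'rV[R]_n -> R[i]) (T : 'rV[R]_n) : R[i] :=
  \sum_(j < m) p j T * charv (nu j) T.

From mathcomp Require Import all_boot all_order all_algebra.
From mathcomp Require Import all_classical all_reals all_analysis.
From mathcomp Require Import complex.
From mathcomp Require Import lra.
Import Order.TTheory GRing.Theory Num.Theory.
Import numFieldTopology.Exports numFieldNormedType.Exports.
Local Open Scope ring_scope.
Local Open Scope classical_set_scope.
Set Implicit Arguments.
Unset Strict Implicit.
Unset Printing Implicit Defensive.

(* Along a lattice direction w, k |-> phi (x + k w) is an exponential polynomial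
   sum_j q_j(k) chi_j(w)^k with unimodular frequencies. Such a sequence tends to
   0 only if, for every frequency, the polynomials carrying it add up to 0:
   averaging against chi(w)^-k kills the top coefficients, then one inducts on
   the degree. Apply this first along a nonzero lattice vector v of the cone,
   where phi tends to 0 by hypothesis, then successively along the rows of B,
   where the partial sums already vanish on the lattice. The surviving classes
   consist of characters that agree on the whole lattice, i.e. that differ by an
   element of the dual lattice, so each class is a single nu_j. Hence p_j
   vanishes on the lattice and, being polynomial, everywhere. *)

Lemma exists_ltr_nat (F : archiRealDomainType) (x : F) : exists N : nat, x < N%:R.
Proof.
exists (Num.Def.archi_bound `|x|).
exact: le_lt_trans (ler_norm _) (archi_boundP (normr_ge0 _)).
Qed.

Section ExponentialPolynomials.
Variable R : realType.
Local Notation C := R[i].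

Definition tends_to_zero (u : nat -> C) := forall eps : C, 0 < eps ->
  exists K, forall k, (K <= k)%N -> `|u k| < eps.

Lemma real_ltr_nat (x : C) : x \is Num.real -> exists N : nat, x < N%:R.
Proof.
move=> /complex_realP [a ->]; have [N aN] := exists_ltr_nat a.
by exists N; rewrite -(rmorph_nat (real_complex R)) ltcR.
Qed.

Lemma tends_to_zero_le_add_invn (f g : nat -> C) (A : C) : 0 <= A ->
  (forall k, (0 < k)%N -> `|g k| <= `|f k| + A / k%:R) ->
  tends_to_zero f -> tends_to_zero g.
Proof.
move=> A0 gf f0 eps eps0.
have eps2 : 0 < eps / 2 by rewrite divr_gt0 // ltr0n.
have [K HK] := f0 _ eps2.
have [N HN] := real_ltr_nat (ger0_real (divr_ge0 A0 (ltW eps2))).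
exists (maxn (maxn K N) 1) => k; rewrite !geq_max => /andP [/andP [Kk Nk] k0].
apply: le_lt_trans (gf k k0) _; rewrite [ltRHS](splitr eps).
apply: ltr_leD; first exact: HK.
have kp : 0 < k%:R :> C by rewrite ltr0n.
rewrite ler_pdivrMr // mulrC -ler_pdivrMr //.
by apply: ltW; apply: lt_le_trans HN _; rewrite ler_nat.
Qed.

Lemma norm_horner_nat_le (p : {poly C}) d (k : nat) : (size p <= d)%N -> (0 < k)%N ->
  k%:R * `|p.[k%:R]| <= (\sum_(e < d) `|p`_e|) * k%:R ^+ d.
Proof.
move=> sp k0; rewrite (horner_coef_wide _ sp).
apply: le_trans (ler_wpM2l (ler0n _ _) (ler_norm_sum _ _ _)) _.
rewrite mulr_suml mulr_sumr; apply: ler_sum => e _.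
rewrite normrM normrX normr_nat mulrCA -exprS.
by rewrite ler_wpM2l // ler_weXn2l ?ler1n.
Qed.

Lemma tends_to_zero_lead_coef (s : seq C) (Q : C -> {poly C}) d :
  {in s, forall z, `|z| = 1} -> {in s, forall z, size (Q z) <= d.+1}%N ->
  tends_to_zero (fun k => \sum_(z <- s) (Q z).[k%:R] * z ^+ k) ->
  tends_to_zero (fun k => \sum_(z <- s) (Q z)`_d * z ^+ k).
Proof.
move=> s1 sQ; set f := fun k => _; set g := fun k => _.
pose T z := Q z - (Q z)`_d *: 'X^d.
have sT z : z \in s -> (size (T z) <= d)%N.
  move=> zs; apply/leq_sizeP => e; rewrite leq_eqVlt => /orP [/eqP <-|de].
    by rewrite coefB coefZ coefXn eqxx mulr1 subrr.
  by rewrite coefB coefZ coefXn gtn_eqF // mulr0 subr0; apply/leq_sizeP: de; exact: sQ.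
pose A := \sum_(z <- s) \sum_(e < d) `|(T z)`_e|.
apply: (@tends_to_zero_le_add_invn f g A).
  by apply: sumr_ge0 => z _; apply: sumr_ge0.
move=> k k0.
have kp : 0 < k%:R :> C by rewrite ltr0n.
have kd_ge1 : 1 <= k%:R ^+ d :> C by rewrite exprn_ege1 // ler1n.
have kd_gt0 : 0 < k%:R ^+ d :> C := lt_le_trans ltr01 kd_ge1.
have gT : k%:R ^+ d * g k = f k - \sum_(z <- s) (T z).[k%:R] * z ^+ k.
  rewrite /f /g mulr_sumr -sumrB; apply: eq_bigr => z _.
  by rewrite hornerD hornerN hornerZ hornerXn mulrBl opprB addrC subrK mulrCA mulrA.
have Tk : k%:R * `|\sum_(z <- s) (T z).[k%:R] * z ^+ k| <= A * k%:R ^+ d.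
  rewrite /A big_seq mulr_suml.
  apply: le_trans (ler_wpM2l (ler0n _ _) (ler_norm_sum _ _ _)) _.
  rewrite mulr_sumr big_seq; apply: ler_sum => z zs.
  by rewrite normrM normrX (s1 z zs) expr1n mulr1 norm_horner_nat_le ?sT.
have -> : `|g k| = `|k%:R ^+ d * g k| / k%:R ^+ d.
  by rewrite normrM normrX normr_nat mulrAC mulfV ?mul1r // gt_eqF.
rewrite gT ler_pdivrMr //.
apply: le_trans (ler_normB _ _) _; rewrite mulrDl; apply: lerD.
  by rewrite ler_peMr.
by rewrite mulrAC ler_pdivlMr // mulrC.
Qed.

Lemma norm_sum_expr_le (rho : C) K N : `|rho| = 1 -> rho != 1 ->
  `|\sum_(k < N) rho ^+ (K + k)| <= 2 / `|rho - 1|.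
Proof.
move=> rho1 rho_neq1.
under eq_bigr => k _ do rewrite exprD.
rewrite -mulr_sumr normrM normrX rho1 expr1n mul1r.
have rho1_gt0 : 0 < `|rho - 1| by rewrite normr_gt0 subr_eq0.
rewrite ler_pdivlMr // mulrC -normrM -subrX1.
by apply: le_trans (ler_normB _ _) _; rewrite normrX rho1 expr1n normr1.
Qed.

(* Averaging the sum against z0^-k over N consecutive k isolates N a(z0); the
   other frequencies only contribute geometric sums, bounded independently of N. *)
Lemma exp_sum_coef_le (s : seq C) (a : C -> C) z0 K N :
  uniq s -> z0 \in s -> {in s, forall z, `|z| = 1} ->
  N%:R * `|a z0| <= \sum_(k < N) `|\sum_(z <- s) a z * z ^+ (K + k)|
                    + \sum_(z <- rem z0 s) `|a z| * (2 / `|z / z0 - 1|).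
Proof.
move=> us z0s s1.
have z0_neq0 : z0 != 0 by rewrite -normr_eq0 s1 ?oner_neq0.
have rem_neq z : z \in rem z0 s -> z != z0.
  by apply: contraTneq => ->; rewrite mem_rem_uniqF.
pose S := \sum_(k < N) (\sum_(z <- s) a z * z ^+ (K + k)) / z0 ^+ (K + k).
pose E := \sum_(z <- rem z0 s) a z * \sum_(k < N) (z / z0) ^+ (K + k).
have SE : S = N%:R * a z0 + E.
  rewrite /S; under eq_bigr => k _ do rewrite mulr_suml (big_rem z0) //=.
  rewrite big_split /=; congr (_ + _).
    under eq_bigr => k _ do rewrite mulfK ?expf_neq0 //.
    by rewrite sumr_const card_ord mulr_natl.
  rewrite exchange_big /=; apply: eq_bigr => z _; rewrite mulr_sumr.
  by apply: eq_bigr => k _; rewrite exprMn exprVn mulrA.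
have -> : N%:R * `|a z0| = `|S - E| by rewrite SE addrK normrM normr_nat.
apply: le_trans (ler_normB _ _) _; apply: lerD.
  apply: le_trans (ler_norm_sum _ _ _) _; apply: ler_sum => k _.
  by rewrite normrM normfV normrX (s1 z0 z0s) expr1n invr1 mulr1.
rewrite /E !big_seq.
apply: le_trans (ler_norm_sum _ _ _) _; apply: ler_sum => z zs.
have zs' : z \in s by apply: mem_rem zs.
rewrite normrM ler_wpM2l // norm_sum_expr_le //.
  by rewrite normrM normfV (s1 z zs') (s1 z0 z0s) invr1 mulr1.
by rewrite -[1](mulfV z0_neq0) (inj_eq (mulIf _)) ?invr_eq0 // rem_neq.
Qed.

Lemma tends_to_zero_exp_sum (s : seq C) (a : C -> C) :
  uniq s -> {in s, forall z, `|z| = 1} ->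
  tends_to_zero (fun k => \sum_(z <- s) a z * z ^+ k) -> {in s, forall z, a z = 0}.
Proof.
move=> us s1 g0 z0 z0s; apply/eqP/negPn/negP => a_neq0.
have eps_gt0 : 0 < `|a z0| / 2 by rewrite divr_gt0 ?normr_gt0.
have [K HK] := g0 _ eps_gt0.
pose D := \sum_(z <- rem z0 s) `|a z| * (2 / `|z / z0 - 1|).
have D_ge0 : 0 <= D by apply: sumr_ge0 => z _; rewrite mulr_ge0 ?divr_ge0.
have [N HN] := real_ltr_nat (ger0_real (divr_ge0 D_ge0 (ltW eps_gt0))).
have lt_coef : \sum_(k < N) `|\sum_(z <- s) a z * z ^+ (K + k)| + D < N%:R * `|a z0|.
  rewrite [ltRHS](_ : _ = N%:R * (`|a z0| / 2) + N%:R * (`|a z0| / 2)).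
    apply: ler_ltD; last by rewrite ltr_pdivrMr in HN.
    apply: (@le_trans _ _ (\sum_(k < N) `|a z0| / 2)).
      by apply: ler_sum => k _; apply/ltW/HK/leq_addr.
    by rewrite sumr_const card_ord mulr_natl.
  by rewrite -mulrDr -splitr.
have := le_lt_trans (exp_sum_coef_le a K N us z0s s1) lt_coef.
by rewrite ltxx.
Qed.

Lemma tends_to_zero_exp_poly (s : seq C) (Q : C -> {poly C}) :
  uniq s -> {in s, forall z, `|z| = 1} ->
  tends_to_zero (fun k => \sum_(z <- s) (Q z).[k%:R] * z ^+ k) ->
  {in s, forall z, Q z = 0}.
Proof.
move=> us s1 f0.
suff size_le d : {in s, forall z, size (Q z) <= d}%N -> {in s, forall z, Q z = 0}.
  by apply: (size_le (\max_(z <- s) size (Q z))) => z zs; apply: leq_bigmax_seq.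
elim: d => [|d IH] sQ z zs.
  by apply/eqP; rewrite -size_poly_eq0 -leqn0 sQ.
have lead0 := tends_to_zero_exp_sum us s1 (tends_to_zero_lead_coef s1 sQ f0).
apply: IH zs => y ys; apply/leq_sizeP => e; rewrite leq_eqVlt => /orP [/eqP <-|de].
  exact: lead0.
by apply/leq_sizeP: de; exact: sQ.
Qed.

Lemma tends_to_zero_exp_poly_class (I : finType) (P : pred I) (w : I -> C)
    (q : I -> {poly C}) :
  (forall i, P i -> `|w i| = 1) ->
  tends_to_zero (fun k => \sum_(i | P i) (q i).[k%:R] * w i ^+ k) ->
  forall i0, P i0 -> \sum_(i | P i && (w i == w i0)) q i = 0.
Proof.
move=> w1 f0 i0 Pi0.
pose s := undup (map w (enum P)).
have ws i : P i -> w i \in s.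
  by move=> Pi; rewrite mem_undup map_f ?mem_enum.
pose Q z := \sum_(i | P i && (w i == z)) q i.
apply: (@tends_to_zero_exp_poly s Q (undup_uniq _)); rewrite ?ws //.
  move=> z; rewrite mem_undup; case/mapP => i; rewrite mem_enum => Pi ->; exact: w1.
suff -> : (fun k => \sum_(z <- s) (Q z).[k%:R] * z ^+ k)
        = (fun k => \sum_(i | P i) (q i).[k%:R] * w i ^+ k) by [].
apply: funext => k; rewrite /Q.
under eq_bigr => z _ do rewrite horner_sum mulr_suml big_mkcondr /=.
rewrite exchange_big /=; apply: eq_bigr => i Pi.
rewrite (big_rem (w i)) ?ws //= eqxx big1_seq ?addr0 // => z /andP [_ zs].
suff /negbTE -> : w i != z by [].
by apply: contraTneq zs => <-; rewrite mem_rem_uniqF ?undup_uniq.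
Qed.
End ExponentialPolynomials.

Section Characters.
Variables (R : realType) (n : nat).
Implicit Types (l x y : 'rV[R]_n).

Lemma dotvDr l x y : dotv l (x + y) = dotv l x + dotv l y.
Proof. by rewrite /dotv -big_split; apply: eq_bigr => k _; rewrite mxE mulrDr. Qed.

Lemma dotvDl l1 l2 x : dotv (l1 + l2) x = dotv l1 x + dotv l2 x.
Proof. by rewrite /dotv -big_split; apply: eq_bigr => k _; rewrite mxE mulrDl. Qed.

Lemma dotv_mulmx l y (B : 'M[R]_n) :
  dotv l (y *m B) = \sum_(i < n) y 0 i * dotv l (row i B).
Proof.
rewrite /dotv; under eq_bigr => k _ do rewrite mxE mulr_sumr.
rewrite exchange_big; apply: eq_bigr => i _; rewrite mulr_sumr.
by apply: eq_bigr => k _; rewrite mxE mulrCA.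
Qed.

Lemma mulcE (a b c d : R) :
  ((a +i* b) * (c +i* d) = (a * c - b * d) +i* (a * d + b * c))%C.
Proof. by []. Qed.

Lemma charvDr l x y : charv l (x + y) = charv l x * charv l y.
Proof. by rewrite /charv dotvDr cosD sinD mulcE [sin _ * _ + _]addrC. Qed.

Lemma charvDl l1 l2 x : charv (l1 + l2) x = charv l1 x * charv l2 x.
Proof. by rewrite /charv dotvDl cosD sinD mulcE [sin _ * _ + _]addrC. Qed.

Lemma norm_charv l x : `|charv l x| = 1.
Proof. by rewrite /charv normc_def /= cos2Dsin2 sqrtr1. Qed.

Lemma charv_neq0 l x : charv l x != 0.
Proof. by rewrite -normr_eq0 norm_charv oner_neq0. Qed.

Lemma charvZ_nat l v (k : nat) : charv l (k%:R *: v) = charv l v ^+ k.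
Proof.
elim: k => [|k IH].
  by rewrite scale0r /charv /dotv big1 ?cos0 ?sin0 // => i _; rewrite mxE mulr0.
by rewrite -natr1 scalerDl scale1r charvDr IH exprSr.
Qed.

Lemma cosD2pi_int (a : R) (k : int) : cos (a + 2 * pi * k%:~R) = cos a.
Proof.
have pi2n (j : nat) : 2 * pi * j%:R = (pi *+ 2) *+ j :> R by rewrite mulr_natr mulr_natl.
case: k => j; first by rewrite pi2n (periodicn (@cosD2pi R)).
rewrite NegzE rmorphN /= mulrN pi2n.
by rewrite -{2}[a](subrK ((pi *+ 2) *+ j.+1)) (periodicn (@cosD2pi R)).
Qed.

Lemma cos_eq1_mul2pi (a : R) : cos a = 1 -> exists k : int, a = 2 * pi * k%:~R.
Proof.
move=> cos_a.
have pi2_gt0 : 0 < 2 * pi :> R by rewrite mulr_gt0 ?pi_gt0.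
pose k := Num.floor ((a + pi) / (2 * pi)).
exists k; apply/eqP; rewrite -subr_eq0; set r := a - _.
have /andP [k_le k_gt] := floor_itv ((a + pi) / (2 * pi)).
have r_le : `|r| <= pi.
  rewrite ler_pdivlMr // in k_le; rewrite ltr_pdivrMr // intrD1 mulrDl mul1r in k_gt.
  by rewrite ler_norml /r [2 * pi * _]mulrC; apply/andP; split; lra.
have : cos `|r| = cos 0 by rewrite cos_norm cos0 -cos_a -(cosD2pi_int _ k) subrK.
move/cos_inj; rewrite !in_itv /= normr_ge0 r_le lexx ltW ?pi_gt0 // => /(_ isT isT).
by move/eqP; rewrite normr_eq0.
Qed.

Lemma charv_eq1 l x : charv l x = 1 -> exists k : int, dotv l x = 2 * pi * k%:~R.
Proof. by move=> /eqP; rewrite eq_complex /= => /andP [/eqP /cos_eq1_mul2pi]. Qed.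

End Characters.

Section Lattices.
Variables (R : realType) (n : nat) (B : 'M[R]_n).

Lemma in_lattice0 : in_lattice B 0.
Proof. by exists 0; rewrite map_mx0 mul0mx. Qed.

Lemma in_latticeD x y : in_lattice B x -> in_lattice B y -> in_lattice B (x + y).
Proof.
move=> [zx ->] [zy ->]; exists (zx + zy); rewrite -mulmxDl; congr (_ *m _).
by apply/matrixP => i j; rewrite !mxE intrD.
Qed.

Lemma in_latticeN x : in_lattice B x -> in_lattice B (- x).
Proof.
move=> [z ->]; exists (- z); rewrite -mulNmx; congr (_ *m _).
by apply/matrixP => i j; rewrite !mxE intrN.
Qed.

Lemma in_latticeB x y : in_lattice B x -> in_lattice B y -> in_lattice B (x - y).
Proof. by move=> Bx By; apply/in_latticeD/in_latticeN. Qed.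

Lemma in_latticeZ_nat x (k : nat) : in_lattice B x -> in_lattice B (k%:R *: x).
Proof.
move=> Bx; elim: k => [|k IH]; first by rewrite scale0r; exact: in_lattice0.
by rewrite -natr1 scalerDl scale1r; apply: in_latticeD.
Qed.

Lemma in_lattice_row i : in_lattice B (row i B).
Proof.
exists (delta_mx 0 i); rewrite rowE; congr (_ *m _).
by apply/matrixP => a b; rewrite !mxE; case: (_ && _).
Qed.

Lemma in_lattice_int_mulmx (y : 'rV[R]_n) :
  (forall i, exists k : int, y 0 i = k%:~R) -> in_lattice B (y *m B).
Proof.
move=> y_int; have [z yz] := choice y_int.
by exists (\row_i z i); congr (_ *m _); apply/matrixP => a b; rewrite !mxE ord1 yz.
Qed.

Lemma in_dual_lattice_rows (l : 'rV[R]_n) :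
  (forall i, exists k : int, dotv l (row i B) = 2 * pi * k%:~R) -> in_dual_lattice B l.
Proof.
move=> l_rows; have [k lk] := choice l_rows.
move=> X [z ->]; exists (\sum_i z 0 i * k i).
rewrite dotv_mulmx rmorph_sum mulr_sumr; apply: eq_bigr => i _.
by rewrite lk !mxE rmorphM /= mulrCA.
Qed.

Lemma lattice_covering_radius : B \in unitmx ->
  exists rho : R, forall y : 'rV[R]_n,
    exists2 v, in_lattice B v & forall j, `|y 0 j - v 0 j| <= rho.
Proof.
move=> Bu; exists (\sum_j \sum_i `|B i j|) => y.
pose t := y *m invmx B; pose z := \row_i Num.floor (t 0 i).
exists (map_mx intr z *m B) => [|j]; first by exists z.
have -> : y 0 j - (map_mx intr z *m B) 0 j = \sum_i (t 0 i - (z 0 i)%:~R) * B i j.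
  rewrite -[in LHS](mulmxKV Bu y) -/t !mxE -sumrB.
  by apply: eq_bigr => i _; rewrite !mxE mulrBl.
apply: le_trans (ler_norm_sum _ _ _) (le_trans (_ : _ <= \sum_i `|B i j|) _).
  apply: ler_sum => i _; rewrite normrM ler_piMl //.
  have /andP [t_ge t_lt] := floor_itv (t 0 i).
  rewrite [z 0 i]mxE ger0_norm ?subr_ge0 //; rewrite intrD1 in t_lt; lra.
by rewrite [leRHS](bigD1 j) //= lerDl; do 2!apply: sumr_ge0 => ? _.
Qed.

End Lattices.

Section PolynomialFunctions.
Variables (R : realType) (n : nat).
Local Notation C := R[i].

Lemma polyfun_line (f : 'rV[R]_n -> C) : is_polyfun f ->
  forall x d, exists P : {poly C}, forall t : R, f (x + t *: d) = P.[t%:C%C].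
Proof.
move=> [s fs] x d.
exists (\sum_(c <- s)
  c.1%:P * \prod_(k < n) ((x 0 k)%:C%C%:P + (d 0 k)%:C%C%:P * 'X) ^+ c.2 k).
move=> t; rewrite fs horner_sum; apply: eq_bigr => c _.
rewrite hornerCM horner_prod; congr (_ * _); apply: eq_bigr => k _.
rewrite horner_exp hornerD hornerC hornerCM hornerX !mxE rmorphD rmorphM.
by rewrite [_ * t%:C%C]mulrC.
Qed.

Lemma poly_nat_eq0 (P : {poly C}) : (forall k : nat, P.[k%:R] = 0) -> P = 0.
Proof.
move=> P_nat; apply/eqP; apply: contraT => P_neq0.
have := max_poly_roots P_neq0 (rs := [seq k%:R | k <- iota 0 (size P)]).
rewrite size_map size_iota ltnn; apply.
  by apply/allP => z /mapP [k _ ->]; rewrite /root P_nat.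
by rewrite map_inj_uniq ?iota_uniq // => a b /eqP; rewrite eqr_nat => /eqP.
Qed.

(* The coordinates in the basis B are freed one at a time: on a line parallel to
   a row of B through lattice points, f is a polynomial vanishing on the naturals. *)
Lemma polyfun_lattice_eq0 (B : 'M[R]_n) (f : 'rV[R]_n -> C) :
  B \in unitmx -> is_polyfun f -> (forall x, in_lattice B x -> f x = 0) ->
  forall x, f x = 0.
Proof.
move=> Bu f_poly f_lat.
suff f_int l : (l <= n)%N -> forall y : 'rV[R]_n,
    (forall i : 'I_n, (l <= i)%N -> exists k : int, y 0 i = k%:~R) -> f (y *m B) = 0.
  move=> x; rewrite -(mulmxKV Bu x); apply: (f_int n (leqnn n)) => i.
  by rewrite leqNgt ltn_ord.
elim: l => [|l IH] ln y y_int.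
  by apply/f_lat/in_lattice_int_mulmx => i; apply: y_int.
pose i := Ordinal ln; pose y' := y - y 0 i *: delta_mx 0 i.
have [P fP] := polyfun_line f_poly (y' *m B) (row i B).
have -> : y *m B = y' *m B + y 0 i *: row i B by rewrite rowE scalemxAl -mulmxDl subrK.
rewrite fP; suff -> : P = 0 by rewrite horner0.
apply: poly_nat_eq0 => k; rewrite -(rmorph_nat (real_complex R)) -fP.
rewrite rowE scalemxAl -mulmxDl; apply: IH; first exact: ltnW.
move=> i' li'; rewrite !mxE; have [->|i'_neq] := eqVneq i' i.
  by exists k%:Z; rewrite eqxx mulr1 subrr add0r mulr1.
have [|z yz] := y_int i'.
  rewrite ltn_neqAle li' andbT; apply: contra i'_neq => /eqP l_i'.
  by apply/eqP/val_inj; rewrite /= l_i'.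
by exists z; rewrite andbF !mulr0 subr0 addr0.
Qed.

End PolynomialFunctions.

Section Cones.
Variables (R : realType) (n : nat).
Implicit Types (C : set 'rV[R]_n) (x y v : 'rV[R]_n).

Lemma open_coord_ball C x : open C -> C x ->
  exists2 e : R, 0 < e & forall y, (forall j, `|x 0 j - y 0 j| < e) -> C y.
Proof.
move=> oC Cx; have /nbhs_ballP [e e_gt0 xeC] : nbhs x C by apply: open_nbhs_nbhs; split.
by exists e => // y xy; apply: xeC; split => // i j; rewrite ord1; exact: xy.
Qed.

Lemma ler_supnorm x i : `|x 0 i| <= supnorm x.
Proof. by rewrite /supnorm (bigD1 i) //= le_max lexx. Qed.

Lemma rV_neq0_coord v : v != 0 -> exists i, v 0 i != 0.
Proof.
move=> v_neq0; have [i vi|v0] := pickP (fun i => v 0 i != 0); first by exists i.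
move/eqP: v_neq0; case; apply/matrixP => a b.
by rewrite ord1 mxE; apply/eqP/negbFE/v0.
Qed.

Lemma supnorm_line_unbounded v y (M : R) : v != 0 ->
  exists K, forall k, (K <= k)%N -> M < supnorm (y + k%:R *: v).
Proof.
move=> /rV_neq0_coord [i vi_neq0].
have vi_gt0 : 0 < `|v 0 i| by rewrite normr_gt0.
have [K HK] := exists_ltr_nat ((`|M| + `|y 0 i|) / `|v 0 i|).
exists K => k Kk; apply: lt_le_trans (ler_supnorm _ i).
rewrite !mxE addrC; apply: le_lt_trans (ler_norm M) _.
apply: lt_le_trans (lerB_normD _ _); rewrite normrM normr_nat ltrBrDr.
rewrite ltr_pdivrMr // in HK; apply: lt_le_trans HK _.
by rewrite ler_wpM2r ?ler_nat // ltW.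
Qed.

Lemma cone_line_eventually C v : open C -> is_cone C -> C v ->
  forall u, exists K, forall k, (K <= k)%N -> C (u + k%:R *: v).
Proof.
move=> oC coneC Cv u.
have [e e_gt0 veC] := open_coord_ball oC Cv.
have [K HK] := exists_ltr_nat (supnorm u / e).
exists K.+1 => k Kk.
have k_gt0 : 0 < k%:R :> R by rewrite ltr0n; exact: leq_trans Kk.
have -> : u + k%:R *: v = k%:R *: (v + k%:R^-1 *: u).
  by rewrite scalerDr scalerA mulfV ?gt_eqF // scale1r addrC.
apply: coneC => //; apply: veC => j.
rewrite !mxE opprD addNKr normrN normrM gtr0_norm ?invr_gt0 // mulrC ltr_pdivrMr //.
apply: le_lt_trans (ler_supnorm u j) _; rewrite ltr_pdivrMr // in HK.
by apply: lt_le_trans HK _; rewrite mulrC ler_wpM2l ?ler_nat ?(ltW e_gt0) // ltnW.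
Qed.

Lemma open_nonzero_point C : (0 < n)%N -> open C -> C !=set0 -> exists x, C x /\ x != 0.
Proof.
move=> n_gt0 oC [x Cx]; have [x0|] := eqVneq x 0; last by exists x.
have [e e_gt0 xeC] := open_coord_ball oC Cx.
have e2_gt0 : 0 < e / 2 by rewrite divr_gt0.
exists (const_mx (e / 2)); split.
  apply: xeC => j; rewrite x0 !mxE sub0r normrN gtr0_norm //.
  by rewrite ltr_pdivrMr // ltr_pMr // ltr1n.
by apply/eqP => /matrixP /(_ 0 (Ordinal n_gt0)); rewrite !mxE; apply/eqP; rewrite gt_eqF.
Qed.

Lemma open_cone_lattice_point (B : 'M[R]_n) C : (0 < n)%N -> B \in unitmx ->
  open C -> C !=set0 -> is_cone C -> exists v, [/\ in_lattice B v, C v & v != 0].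
Proof.
move=> n_gt0 Bu oC C0 coneC.
have [x [Cx x_neq0]] := open_nonzero_point n_gt0 oC C0.
have [i xi_neq0] := rV_neq0_coord x_neq0.
have [e e_gt0 xeC] := open_coord_ball oC Cx.
have [rho rhoP] := lattice_covering_radius Bu.
pose e' := Num.min e `|x 0 i|.
have e'_gt0 : 0 < e' by rewrite lt_min e_gt0 normr_gt0.
have [N HN] := exists_ltr_nat (rho / e').
have N_gt0 : 0 < N.+1%:R :> R by rewrite ltr0n.
have [v v_lat xv] := rhoP (N.+1%:R *: x).
have xv_close j : `|x 0 j - (N.+1%:R^-1 *: v) 0 j| < e'.
  rewrite !mxE -[x 0 j](mulKf (lt0r_neq0 N_gt0)) -mulrBr normrM gtr0_norm ?invr_gt0 //.
  rewrite mulrC ltr_pdivrMr //; apply: le_lt_trans (_ : _ <= rho) _.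
    by have := xv j; rewrite mxE.
  rewrite ltr_pdivrMr // in HN; apply: lt_le_trans HN _.
  by rewrite mulrC ler_wpM2l ?ler_nat ?ltW.
exists v; split => //.
  rewrite -(scalerKV (lt0r_neq0 N_gt0) v); apply: coneC => //; apply: xeC => j.
  by apply: lt_le_trans (xv_close j) _; rewrite ge_min lexx.
apply: contraTneq (xv_close i) => ->; rewrite scaler0 mxE subr0 -leNgt.
by rewrite ge_min lexx orbT.
Qed.

End Cones.

Section Refinement.
Variables (R : realType) (n m : nat) (B : 'M[R]_n).
Variables (nu : 'I_m -> 'rV[R]_n) (p : 'I_m -> 'rV[R]_n -> R[i]).
Hypothesis p_poly : forall j, is_polyfun (p j).

Definition partial_phi (S : pred 'I_m) (x : 'rV[R]_n) :=
  \sum_(j | S j) p j x * charv (nu j) x.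

Definition vanishes_on_lattice (S : pred 'I_m) :=
  forall x, in_lattice B x -> partial_phi S x = 0.

Definition char_class (S : pred 'I_m) (j0 : 'I_m) (ws : seq 'rV[R]_n) : pred 'I_m :=
  [pred j | S j & all (fun w => charv (nu j) w == charv (nu j0) w) ws].

(* Along w, k |-> partial_phi S (x + k w) is an exponential polynomial with
   frequencies charv (nu j) w, whose coefficient polynomials take the values
   p j x * charv (nu j) x at k = 0. *)
Lemma vanishes_on_lattice_char_class (S : pred 'I_m) j0 (w : 'rV[R]_n) : S j0 ->
  (forall x, in_lattice B x -> tends_to_zero (fun k => partial_phi S (x + k%:R *: w))) ->
  vanishes_on_lattice (char_class S j0 [:: w]).
Proof.
move=> Sj0 S0 x x_lat.
have [P Pline] := choice (fun j => polyfun_line (p_poly j) x w).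
pose q j := charv (nu j) x *: P j.
have q_exp k : partial_phi S (x + k%:R *: w)
                = \sum_(j | S j) (q j).[k%:R] * charv (nu j) w ^+ k.
  apply: eq_bigr => j _; rewrite hornerZ -(rmorph_nat (real_complex R)) -Pline.
  by rewrite charvDr charvZ_nat mulrCA mulrA.
have := tends_to_zero_exp_poly_class (fun j _ => norm_charv (nu j) w) _ Sj0.
move/(_ q); rewrite -(funext q_exp) => /(_ (S0 x x_lat)) /(congr1 (horner^~ 0)).
rewrite horner_sum horner0 => <-; apply: eq_big => [j|j _] /=.
  by rewrite /char_class /= andbT.
by rewrite hornerZ -[0]/(0%:C%C) -Pline scale0r addr0 mulrC.
Qed.

Lemma vanishes_on_lattice_char_classes (S : pred 'I_m) j0 (ws : seq 'rV[R]_n) : S j0 ->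
  (forall w, w \in ws -> in_lattice B w) ->
  vanishes_on_lattice S -> vanishes_on_lattice (char_class S j0 ws).
Proof.
move=> Sj0 ws_lat S0; elim: ws ws_lat => [_ x x_lat|w ws IH ws_lat].
  by rewrite -(S0 x x_lat); apply: eq_bigl => j; rewrite /char_class /= andbT.
have w_lat : in_lattice B w by apply: ws_lat; rewrite mem_head.
have IH' := IH (fun w' w'ws => ws_lat w' (mem_behead (s := w :: ws) w'ws)).
have Sj0' : char_class S j0 ws j0 by rewrite /char_class /= Sj0; apply/allP => w' _ /=.
move=> x x_lat; rewrite -(vanishes_on_lattice_char_class (w := w) Sj0' _ x_lat).
  by apply: eq_bigl => j; rewrite /char_class /= andbT -andbA [all _ _ && _]andbC.
move=> y y_lat eps eps_gt0; exists 0%N => k _.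
by rewrite IH' ?normr0 //; apply/in_latticeD/in_latticeZ_nat.
Qed.

Lemma char_class_rows_pred1 (S : pred 'I_m) j0 :
  (forall j k, j != k -> ~ in_dual_lattice B (nu j - nu k)) -> S j0 ->
  char_class S j0 [seq row i B | i <- enum 'I_n] =1 pred1 j0.
Proof.
move=> nu_sep Sj0 j; apply/idP/eqP => [/andP [_ /allP rows]|->]; last first.
  by rewrite /char_class /= Sj0; apply/allP => w _ /=.
apply/eqP/negPn/negP => j_neq; apply: (nu_sep _ _ j_neq).
apply: in_dual_lattice_rows => i; apply: charv_eq1.
apply: (mulIf (charv_neq0 (nu j0) (row i B))); rewrite -charvDl subrK mul1r.
by apply/eqP/rows/map_f; rewrite mem_enum.
Qed.

Lemma phi_cone_tends_to_zero (C : set 'rV[R]_n) (Tstar v : 'rV[R]_n) :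
  open C -> is_cone C -> in_lattice B Tstar -> in_lattice B v -> C v -> v != 0 ->
  (forall eps : R, 0 < eps -> exists M : R, forall T : 'rV[R]_n,
      in_lattice B (T - Tstar) -> C (T - Tstar) -> M < supnorm T ->
      `|phi nu p T| < eps%:C%C) ->
  forall x, in_lattice B x -> tends_to_zero (fun k => partial_phi predT (x + k%:R *: v)).
Proof.
move=> oC coneC Tstar_lat v_lat Cv v_neq0 phi_small x x_lat [a b].
rewrite ltcE /= => /andP [/eqP -> a_gt0].
have [M HM] := phi_small a a_gt0.
have [K1 HK1] := cone_line_eventually oC coneC Cv (x - Tstar).
have [K2 HK2] := supnorm_line_unbounded x M v_neq0.
exists (maxn K1 K2) => k; rewrite geq_max => /andP [k1 k2]; apply: HM (HK2 k k2).
  by apply/in_latticeB/Tstar_lat; apply/in_latticeD/in_latticeZ_nat.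
by rewrite addrAC; exact: HK1.
Qed.

End Refinement.

Unset Implicit Arguments.

Theorem mainTheorem2 (R : realType) (n m : nat) (B : 'M[R]_n)
  (nu : 'I_m -> 'rV[R]_n) (p : 'I_m -> 'rV[R]_n -> R[i])
  (C : set 'rV[R]_n) (Tstar : 'rV[R]_n) :
  (0 < n)%N ->
  B \in unitmx ->
  (forall j k : 'I_m, j != k -> ~ in_dual_lattice B (nu j - nu k)) ->
  (forall j, is_polyfun (p j)) ->
  open C -> C !=set0 -> is_cone C ->
  in_lattice B Tstar ->
  (forall eps : R, 0 < eps -> exists M : R, forall T : 'rV[R]_n,
      in_lattice B (T - Tstar) -> C (T - Tstar) -> M < supnorm T ->
      `|phi nu p T| < (eps%:C)%C) ->
  forall (j : 'I_m) (x : 'rV[R]_n), p j x = 0.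
Proof.
move=> n_gt0 Bu nu_sep p_poly oC C0 coneC Tstar_lat phi_small j0.
have [v [v_lat Cv v_neq0]] := open_cone_lattice_point n_gt0 Bu oC C0 coneC.
have phi_cone := phi_cone_tends_to_zero oC coneC Tstar_lat v_lat Cv v_neq0 phi_small.
have class0 := vanishes_on_lattice_char_class p_poly (isT : predT j0) phi_cone.
have rows_lat w : w \in [seq row i B | i <- enum 'I_n] -> in_lattice B w.
  by case/mapP => i _ ->; apply: in_lattice_row.
have Sj0 : char_class nu predT j0 [:: v] j0 by rewrite /char_class /= eqxx.
have rows0 := vanishes_on_lattice_char_classes p_poly Sj0 rows_lat class0.
apply: polyfun_lattice_eq0 Bu (p_poly j0) _ => x x_lat.
have := rows0 x x_lat.
rewrite /partial_phi (big_pred1 j0 (char_class_rows_pred1 nu_sep Sj0)).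
by move/eqP; rewrite mulf_eq0 (negbTE (charv_neq0 _ _)) orbF => /eqP.
Qed.
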